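(* Let $Z$ be a unit Fréchet random variable, i.e. $\Pr(Z \le z) = \exp(-1/z)$ for $z > 0$. Let $\mathbf A = (A_1, \ldots, A_d)$ be a random vector in $\mathbb R^d$, independent of $Z$, such that $0 < \mathbb E[\max(A_j, 0)] < \infty$ for every $j \in \{1, \ldots, d\}$. Put $\mathbf X = (X_1, \ldots, X_d) = (A_1 Z, \ldots, A_d Z)$. Then for every $\mathbf x = (x_1, \ldots, x_d) \in (0, \infty)^d$, \[ \lim_{n \to \infty} \Pr[ X_1 \le n x_1, \ldots, X_d \le n x_d ]^n = \exp\bigl\{ - \mathbb E[ \max(A_1/x_1, \ldots, A_d/x_d, 0) ] \bigr\}. \] *)

From HB Require Import structures.
From mathcomp Require Import all_boot all_order all_algebra.
From mathcomp Require Import all_classical all_reals all_analysis.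
Set Implicit Arguments. Unset Strict Implicit. Unset Printing Implicit Defensive.
Import Order.TTheory GRing.Theory Num.Theory.
Import numFieldNormedType.Exports.
Local Open Scope classical_set_scope.
Local Open Scope ring_scope.

(* Independence of the real random variable Z and the random vector
   A = (A_j)_{j < m}: product rule on the generating pi-system of
   "rectangles" {Z in B} /\ {A_j in C_j for all j}, with B, C_j Borel. *)
Definition indep_rv_vec {d : measure_display} {T : measurableType d}
  {R : realType} (P : probability T R) (Z : T -> R) (m : nat)
  (A : 'I_m -> T -> R) : Prop :=
  forall (B : set R) (C : 'I_m -> set R),
    measurable B -> (forall j, measurable (C j)) ->
    P (Z @^-1` B `&` \bigcap_(j in [set: 'I_m]) (A j @^-1` C j))
    = (P (Z @^-1` B) * P (\bigcap_(j in [set: 'I_m]) (A j @^-1` C j)))%E.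

Definition unit_frechet {d : measure_display} {T : measurableType d}
  {R : realType} (P : probability T R) (Z : T -> R) : Prop :=
  forall z : R, 0 < z -> P (Z @^-1` `]-oo, z]) = (expR (- z^-1))%:E.

From HB Require Import structures.
From mathcomp Require Import all_boot all_order all_algebra.
From mathcomp Require Import all_classical all_reals all_analysis measurable_realfun.
From mathcomp Require Import lra ring.
Set Implicit Arguments. Unset Strict Implicit. Unset Printing Implicit Defensive.
Import Order.TTheory GRing.Theory Num.Theory.
Import numFieldNormedType.Exports.
Local Open Scope classical_set_scope.
Local Open Scope ring_scope.

(* Put M := max(A_1/x_1, ..., A_d/x_d, 0). Off the null set {Z <= 0} the
   event {A_j Z <= n x_j for all j} is {Z M <= n}. Since M is a function of A,
   it is independent of Z, so Fubini and the Frechet law give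
   p_n := P(Z M <= n) = E[exp(-M/n)]. As 0 <= n(1 - exp(-y/n)) <= y with
   limit y, dominated convergence yields n(1 - p_n) -> E[M], and the bounds
   exp(-n(1 - p)/p) <= p^n <= exp(-n(1 - p)) turn this into
   p_n^n -> exp(-E[M]). *)

Lemma bigmax0_le_sum_maxr0 (R : realDomainType) (I : Type) (s : seq I)
    (F : I -> R) :
  \big[Num.max/0]_(i <- s) F i <= \sum_(i <- s) Num.max (F i) 0.
Proof.
elim: s => [|i s IHs]; first by rewrite !big_nil.
rewrite !big_cons ge_max.
have le_Fi : F i <= Num.max (F i) 0 by rewrite le_max lexx.
have maxr0_ge0 : 0 <= Num.max (F i) 0 by rewrite le_max lexx orbT.
have sum_ge0 : 0 <= \sum_(j <- s) Num.max (F j) 0.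
  by apply: sumr_ge0 => j _; rewrite le_max lexx orbT.
by apply/andP; split; lra.
Qed.

Lemma cvg_invn (R : realType) : (fun n : nat => (n%:R : R)^-1) @ \oo --> 0.
Proof. by rewrite -cvg_shiftS; exact: cvg_harmonic. Qed.

Section n_one_sub_expR.
Variable R : realType.
Implicit Types y : R.

Lemma n_one_sub_expR_bounds y (n : nat) : 0 <= y ->
  0 <= n%:R * (1 - expR (- y / n%:R)) <= y.
Proof.
move=> y_ge0; have [->|n_neq0] := eqVneq n 0%N; first by rewrite mul0r lexx.
have n_gt0 : 0 < (n%:R : R) by rewrite ltr0n lt0n.
apply/andP; split.
  by rewrite mulr_ge0 ?ler0n// subr_ge0 expR_le1 mulNr oppr_le0 divr_ge0// ltW.
have le1D := expR_ge1Dx (- y / n%:R).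
have {2}-> : y = n%:R * (y / n%:R) by rewrite mulrC divfK// gt_eqF.
by rewrite ler_wpM2l ?ler0n//; rewrite mulNr in le1D *; lra.
Qed.

Lemma n_one_sub_expR_lbound y (n : nat) : 0 <= y -> (0 < n)%N ->
  y - y ^+ 2 / n%:R <= n%:R * (1 - expR (- y / n%:R)).
Proof.
move=> y_ge0 n_gt0; have n_gt0' : 0 < (n%:R : R) by rewrite ltr0n.
set u := y / n%:R; have u_ge0 : 0 <= u by rewrite divr_ge0// ltW.
(* [1 + u <= expR u] inverted, then [1/(1 + u) <= 1 - u + u^2]. *)
have expRN_le : expR (- u) <= 1 - u + u ^+ 2.
  rewrite expRN (@le_trans _ _ (1 + u)^-1)//.
    by rewrite lef_pV2 ?posrE ?expR_gt0 ?expR_ge1Dx//; lra.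
  rewrite -[(1 + u)^-1]mul1r ler_pdivrMr; last lra.
  have : 0 <= u ^+ 3 by rewrite exprn_ge0.
  by rewrite !exprS expr0 !mulr1; nra.
have -> : y - y ^+ 2 / n%:R = n%:R * (u - u ^+ 2).
  by rewrite /u; field; rewrite gt_eqF.
by rewrite ler_wpM2l ?ler0n// mulNr; lra.
Qed.

Lemma cvg_n_one_sub_expR y : 0 <= y ->
  (fun n : nat => n%:R * (1 - expR (- y / n%:R))) @ \oo --> y.
Proof.
move=> y_ge0.
apply: (@squeeze_cvgr _ _ _ _ (fun n : nat => y - y ^+ 2 * (n%:R : R)^-1)
  (fun=> y)); last exact: cvg_cst.
- near=> n; have /andP[_ ->] := n_one_sub_expR_bounds n y_ge0.
  by rewrite andbT n_one_sub_expR_lbound//; near: n; exists 1%N.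
- have := cvgB (cvg_cst y) (cvgM (cvg_cst (y ^+ 2)) (@cvg_invn R)).
  by rewrite mulr0 subr0; apply.
Unshelve. all: by end_near.
Qed.

End n_one_sub_expR.

Lemma expR_pow_bounds (R : realType) (p : R) (n : nat) : 0 < p ->
  expR (- (n%:R * (1 - p)) / p) <= p ^+ n <= expR (- (n%:R * (1 - p))).
Proof.
(* Both bounds are [1 + u <= expR u], at u = 1/p - 1 and at u = p - 1. *)
move=> p_gt0.
apply/andP; split.
  have -> : - (n%:R * (1 - p)) / p = n%:R * (1 - p^-1).
    by field; rewrite gt_eqF.
  rewrite expRM_natl; apply: lerXn2r; rewrite ?nnegrE ?expR_ge0 ?(ltW p_gt0)//.
  rewrite -[leRHS]invrK -opprB expRN lef_pV2 ?posrE ?expR_gt0 ?invr_gt0//.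
  by rewrite (le_trans _ (expR_ge1Dx _))// addrCA subrr addr0.
have -> : - (n%:R * (1 - p)) = n%:R * (p - 1) by rewrite mulrBr opprB mulrBr.
rewrite expRM_natl; apply: lerXn2r; rewrite ?nnegrE ?expR_ge0 ?(ltW p_gt0)//.
by rewrite (le_trans _ (expR_ge1Dx _))// addrCA subrr addr0.
Qed.

Lemma cvg_pow_n_one_sub (R : realType) (p : nat -> R) (L : R) :
  (fun n => n%:R * (1 - p n)) @ \oo --> L ->
  (fun n => p n ^+ n) @ \oo --> expR (- L).
Proof.
move=> cvg_L.
have cvg_p1 : p n @[n --> \oo] --> (1 : R).
  have : (fun n => 1 - n%:R * (1 - p n) * n%:R^-1) @ \oo --> (1 : R) - L * 0.
    exact: cvgB (cvg_cst _) (cvgM cvg_L (@cvg_invn R)).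
  rewrite mulr0 subr0; apply: cvg_trans; apply: near_eq_cvg; near=> n.
  rewrite mulrAC divff ?mul1r; first by rewrite opprB addrC subrK.
  by rewrite pnatr_eq0 -lt0n; near: n; exists 1%N.
have p_gt0 : \forall n \near \oo, 0 < p n by exact: (cvgr_gt 1).
apply: (@squeeze_cvgr _ _ _ _ (fun n => expR (- (n%:R * (1 - p n)) / p n))
  (fun n => expR (- (n%:R * (1 - p n))))).
- by near=> n; apply: expR_pow_bounds; near: n.
- have cvg_exponent : (fun n => - (n%:R * (1 - p n)) / p n) @ \oo --> - L.
    have := cvgM (cvgN cvg_L) (cvgV (oner_neq0 R) cvg_p1).
    by rewrite invr1 mulr1; apply.
  exact: (continuous_cvg _ (@continuous_expR R (- L)) cvg_exponent).
- exact: (continuous_cvg _ (@continuous_expR R (- L)) (cvgN cvg_L)).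
Unshelve. all: by end_near.
Qed.

Lemma measurable_fun_bigmax0 d (T : measurableType d) (R : realType)
    (I : Type) (s : seq I) (F : I -> T -> R) :
  (forall i, measurable_fun setT (F i)) ->
  measurable_fun setT (fun t => \big[Num.max/0]_(i <- s) F i t).
Proof.
move=> mF; elim: s => [|i s IHs].
  by under eq_fun do rewrite big_nil; exact: measurable_cst.
by under eq_fun do rewrite big_cons; exact: measurable_maxr.
Qed.

Lemma cvg_n_one_sub_integral_expR d (T : measurableType d) (R : realType)
    (P : probability T R) (M : T -> R) :
  measurable_fun setT M -> (forall t, 0 <= M t) ->
  P.-integrable setT (EFin \o M) ->
  (fun n : nat => n%:R * (1 - Rintegral P setT (fun t => expR (- M t / n%:R))))
    @ \oo --> Rintegral P setT M.
Proof.
move=> mM M_ge0 intM.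
pose f_ (n : nat) t := (n%:R * (1 - expR (- M t / n%:R)))%:E.
have mexpM (n : nat) : measurable_fun setT (fun t => expR (- M t / n%:R)).
  apply: (measurableT_comp (@measurable_expR R)).
  by apply: measurable_funM; [exact: measurable_funN|exact: measurable_cst].
have int1 : P.-integrable setT (EFin \o (fun=> 1 : R)).
  exact: finite_measure_integrable_cst.
have intexpM (n : nat) :
    P.-integrable setT (EFin \o (fun t => expR (- M t / n%:R))).
  apply: (le_integrable _ _ _ int1) => //; first exact/measurable_EFinP.
  move=> t _ /=; rewrite lee_fin !ger0_norm ?expR_ge0 ?ler01//.
  by rewrite expR_le1 mulNr oppr_le0 divr_ge0.
have mf_ n : measurable_fun setT (f_ n).
  apply/measurable_EFinP; apply: measurable_funM => //.
  by apply: measurable_funB => //; exact: mexpM.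
have f_M t : setT t -> f_ ^~ t @ \oo --> (EFin \o M) t.
  by move=> _; apply: cvg_EFin; [exact: nearW|exact: cvg_n_one_sub_expR].
have f_le_M n t : setT t -> (`|f_ n t| <= (EFin \o M) t)%E.
  move=> _; have /andP[f_ge0 f_le] := n_one_sub_expR_bounds n (M_ge0 t).
  by rewrite /f_ gee0_abs ?lee_fin.
have := @dominated_cvg d T R P setT measurableT f_ (EFin \o M) (EFin \o M)
  mf_ f_M (fun _ _ => erefl) intM f_le_M.
rewrite -(fineK (integrable_fin_num measurableT intM)) => /fine_cvg.
apply: cvg_trans; apply: near_eq_cvg; near=> n => /=.
rewrite /f_ -/(Rintegral P setT (fun t => n%:R * (1 - expR (- M t / n%:R)))).
have int_one_sub : P.-integrable setT
    (EFin \o (fun t => 1 - expR (- M t / n%:R))).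
  apply: (eq_integrable measurableT _ _ _
    (integrableB measurableT int1 (intexpM n))).
  by move=> t _ /=; rewrite EFinB.
rewrite (RintegralZl _ measurableT int_one_sub) RintegralB// Rintegral_cst//.
by rewrite (_ : fine _ = 1) ?mul1r//; exact: (congr1 fine (probability_setT P)).
Unshelve. all: by end_near.
Qed.

Lemma measurable_preimageT d d' (T : measurableType d) (U : measurableType d')
    (f : T -> U) (S : set U) :
  measurable_fun setT f -> measurable S -> measurable (f @^-1` S).
Proof. by move=> mf mS; rewrite -[_ @^-1` _]setTI; exact: mf. Qed.

Lemma unit_frechet_le0 d (T : measurableType d) (R : realType)
    (P : probability T R) (Z : T -> R) :
  measurable_fun setT Z -> unit_frechet P Z -> P (Z @^-1` `]-oo, 0]) = 0%E.
Proof.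
move=> mZ frechetZ.
have mZle c : measurable (Z @^-1` `]-oo, c]) by exact: measurable_preimageT.
apply/eqP; rewrite eq_le measure_ge0 andbT.
apply/lee_addgt0Pr => e e_gt0; rewrite add0e.
have le_e : Z @^-1` `]-oo, 0] `<=` Z @^-1` `]-oo, e].
  by move=> t /=; rewrite !in_itv /= => Zt_le0; lra.
(* P(Z <= e) = exp(-1/e) <= e, as exp(1/e) >= 1 + 1/e. *)
have P_le_e : (P (Z @^-1` `]-oo, e]) <= e%:E)%E.
  rewrite frechetZ// lee_fin expRN -[leRHS]invrK.
  rewrite lef_pV2 ?posrE ?expR_gt0 ?invr_gt0//.
  by rewrite (le_trans _ (expR_ge1Dx _))// lerDr.
apply: le_trans P_le_e.
exact: le_measure (mem_set (mZle 0)) (mem_set (mZle e)) le_e.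
Qed.

Definition indep_rv d (T : measurableType d) (R : realType)
    (P : probability T R) (Z M : T -> R) : Prop :=
  forall B C, measurable B -> measurable C ->
    P (Z @^-1` B `&` M @^-1` C) = (P (Z @^-1` B) * P (M @^-1` C))%E.

Section indep_rv.
Context d (T : measurableType d) (R : realType) (P : probability T R).
Variables (Z M : T -> R).
Hypotheses (mZ : measurable_fun setT Z) (mM : measurable_fun setT M).

Lemma indep_rv_rays :
  (forall B c, measurable B ->
    P (Z @^-1` B `&` M @^-1` `]-oo, c[) =
    (P (Z @^-1` B) * P (M @^-1` `]-oo, c[))%E) ->
  indep_rv P Z M.
Proof.
move=> indep_rays B C mB mC.
have mZB := measurable_preimageT mZ mB.
have measurableE : @measurable _ R = <<s @RGenInftyO.G R >>.
  exact: RGenInftyO.measurableE.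
apply: (dynkin_induction (G := @RGenInftyO.G R)
  (P := fun S => P (Z @^-1` B `&` M @^-1` S) =
                 (P (Z @^-1` B) * P (M @^-1` S))%E)); rewrite -?measurableE//.
- move=> _ _ [a ->] [b ->]; exists (Num.min a b).
  apply/seteqP; split => t /=; rewrite !in_itv /= lt_min; first by case=> -> ->.
  by case/andP.
- by rewrite preimage_setT setIT probability_setT mule1.
- by move=> _ [c ->]; exact: indep_rays.
- move=> S mS indepS; have mMS := measurable_preimageT mM mS.
  rewrite -[M @^-1` ~` S]/(~` (M @^-1` S)) -setDE measureD//; last first.
    by rewrite (le_lt_trans (probability_le1 _ _)) ?ltry.
  rewrite probability_setC// muleBr ?mule1 ?fin_num_measure//.
  by congr (_ - _)%E; exact: indepS.
- move=> F mF tF indepF.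
  have tMF : trivIset [set: nat] (fun n => M @^-1` F n).
    apply/trivIsetP => i j _ _ ij; move/trivIsetP : tF => /(_ i j I I ij) Fij.
    by rewrite -preimage_setI Fij preimage_set0.
  have tZBMF : trivIset [set: nat] (fun n => Z @^-1` B `&` M @^-1` F n).
    apply/trivIsetP => i j _ _ ij; move/trivIsetP : tMF => /(_ i j I I ij).
    by rewrite setIACA setIid => ->; rewrite setI0.
  rewrite preimage_bigcup setI_bigcupr.
  rewrite measure_bigcup//; last first.
    by move=> i _; apply: measurableI => //; exact: measurable_preimageT.
  rewrite measure_bigcup//; last by move=> i _; exact: measurable_preimageT.
  rewrite -(fineK (fin_num_measure P _ mZB)) -nneseriesZl//.
  by apply: eq_eseriesr => n _; rewrite fineK ?fin_num_measure//; exact: indepF.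
Qed.

Let Zf : {mfun T >-> R} := HB.pack Z (isMeasurableFun.Build _ _ _ _ _ mZ).
Let Mf : {mfun T >-> R} := HB.pack M (isMeasurableFun.Build _ _ _ _ _ mM).
Let MZf : {mfun T >-> (R * R)%type} := HB.pack (fun t => (M t, Z t))
  (isMeasurableFun.Build _ _ _ _ _ (measurable_fun_pair mM mZ)).

Lemma indep_rv_joint_law : indep_rv P Z M -> forall S, measurable S ->
  P ((fun t => (M t, Z t)) @^-1` S) =
  (distribution P Mf \x distribution P Zf)%E S.
Proof.
move=> indepZM S mS.
apply: (measure_unique [set A `*` B | A in measurable & B in measurable]
  (fun=> setT) _ _ _ _ (distribution P MZf)) => //.
- exact: measurable_prod_measurableType.
- move=> _ _ [A mA [B mB <-]] [A' mA' [B' mB' <-]].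
  exists (A `&` A'); first exact: measurableI.
  by exists (B `&` B'); [exact: measurableI|rewrite setXI].
- by move=> _; exists setT => //; exists setT => //; rewrite setXTT.
- by rewrite bigcup_const.
- move=> _ [A mA [B mB <-]].
  apply: eq_trans (esym (product_measure1E _ _ mA mB)).
  rewrite /distribution /pushforward muleC -indepZM//.
  by congr (P _); apply/seteqP; split => t /= [].
- by move=> _; rewrite (le_lt_trans (probability_le1 _ _)) ?ltry.
Qed.

Lemma indep_rv_unit_frechet_mul_le c : indep_rv P Z M -> unit_frechet P Z ->
  (forall t, 0 <= M t) -> 0 < c ->
  P [set t | Z t * M t <= c] = (\int[P]_t (expR (- M t / c))%:E)%E.
Proof.
move=> indepZM frechetZ M_ge0 c_gt0.
have mS : measurable [set p : R * R | p.2 * p.1 <= c].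
  rewrite -[X in measurable X]setTI; apply: measurable_fun_le => //.
  by apply: measurable_funM; [exact: measurable_snd|exact: measurable_fst].
rewrite -[[set t | _]]/((fun t => (M t, Z t)) @^-1` [set p | p.2 * p.1 <= c]).
rewrite indep_rv_joint_law// /product_measure1 /= ge0_integral_pushforward//.
  rewrite preimage_setT; apply: eq_integral => t _ /=.
  rewrite /distribution /pushforward.
  have [M0|M_neq0] := eqVneq (M t) 0.
    rewrite M0 oppr0 mul0r expR0.
    have -> : Z @^-1` xsection [set p : R * R | p.2 * p.1 <= c] 0 = setT.
      by apply/seteqP; split => z //= _; rewrite /xsection /= inE /= mulr0 ltW.
    by rewrite probability_setT.
  have M_gt0 : 0 < M t by rewrite lt_neqAle eq_sym M_neq0 M_ge0.
  have -> : Z @^-1` xsection [set p : R * R | p.2 * p.1 <= c] (M t) =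
      Z @^-1` `]-oo, c / M t].
    apply/seteqP; split => z /=; rewrite /xsection /= inE /= in_itv /=;
    by rewrite ler_pdivlMr.
  by rewrite frechetZ ?divr_gt0// invf_div mulNr.
exact: measurable_fun_xsection.
Qed.

End indep_rv.

Section frechet_scale_mixture.
Context d (T : measurableType d) (R : realType) (P : probability T R) (m : nat).
Variables (Z : T -> R) (A : 'I_m -> T -> R) (x : 'I_m -> R).
Hypothesis mZ : measurable_fun setT Z.
Hypothesis mA : forall j, measurable_fun setT (A j).
Hypotheses (frechetZ : unit_frechet P Z) (indepZA : indep_rv_vec P Z A).
Hypothesis x_gt0 : forall j, 0 < x j.
Hypothesis intA : forall j, (\int[P]_t (Num.max (A j t) 0)%:E < +oo)%E.

Let M t := \big[Num.max/0]_(j < m) (A j t / x j).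

Let mM : measurable_fun setT M.
Proof.
apply: measurable_fun_bigmax0 => j.
by apply: measurable_funM => //; exact: measurable_cst.
Qed.

Let M_ge0 t : 0 <= M t. Proof. exact: bigmax_ge_id. Qed.

Let M_le t c : 0 <= c -> M t <= c <-> forall j, A j t <= c * x j.
Proof.
move=> c_ge0; split => [/bigmax_leP[_ M_le_c] j|A_le].
  by rewrite -ler_pdivrMr// M_le_c.
by apply/bigmax_leP; split => // j _; rewrite ler_pdivrMr.
Qed.

Let M_lt t c : 0 < c -> M t < c <-> forall j, A j t < c * x j.
Proof.
move=> c_gt0; split => [/bigmax_ltP[_ M_lt_c] j|A_lt].
  by rewrite -ltr_pdivrMr// M_lt_c.
by apply/bigmax_ltP; split => // j _; rewrite ltr_pdivrMr.
Qed.

Let intM : P.-integrable setT (EFin \o M).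
Proof.
have maxr0_ge0 (a : R) : 0 <= Num.max a 0 by rewrite le_max lexx orbT.
apply: (@le_integrable _ _ _ P setT measurableT _
  (fun t => \sum_(j < m) (((x j)^-1)%:E * (Num.max (A j t) 0)%:E))%E).
- exact/measurable_EFinP.
- move=> t _ /=; under eq_bigr do rewrite -EFinM.
  rewrite sumEFin !abse_EFin lee_fin (ger0_norm (M_ge0 t)).
  rewrite ger0_norm; last first.
    by apply: sumr_ge0 => j _; rewrite mulr_ge0 ?invr_ge0 ?(ltW (x_gt0 j)).
  apply: le_trans (bigmax0_le_sum_maxr0 _ _) _.
  apply: ler_sum => j _.
  rewrite ge_max mulr_ge0 ?invr_ge0 ?(ltW (x_gt0 j))// andbT.
  by rewrite [_ * Num.max _ _]mulrC ler_pM2r ?invr_gt0// le_max lexx.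
- apply: integrable_sum => // j _; apply: integrableZl => //.
  apply/integrableP; split.
    apply/measurable_EFinP.
    by apply: measurable_maxr => //; exact: measurable_cst.
  by under eq_integral do rewrite gee0_abs ?lee_fin//; exact: intA.
Qed.

Let indepZM : indep_rv P Z M.
Proof.
apply: indep_rv_rays => // B c mB.
have [c_le0|c_gt0] := leP c 0.
  have -> : M @^-1` `]-oo, c[ = set0.
    apply/seteqP; split => t //=; rewrite in_itv /= => Mt_lt_c.
    by have := M_ge0 t; lra.
  by rewrite setI0 !measure0 mule0.
have -> : M @^-1` `]-oo, c[ =
    \bigcap_(j in [set: 'I_m]) (A j @^-1` `]-oo, c * x j[).
  apply/seteqP; split => t /=; rewrite in_itv /= M_lt//.
    by move=> A_lt j _ /=; rewrite in_itv /= A_lt.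
  by move=> A_lt j; have := A_lt j I; rewrite /= in_itv.
exact: indepZA.
Qed.

Let prob_event c : 0 < c ->
  P [set t | forall j, A j t * Z t <= c * x j] = P [set t | Z t * M t <= c].
Proof.
move=> c_gt0; set E := [set t | _]; set F := [set t | _].
pose N := Z @^-1` `]-oo, 0].
have mN : measurable N by exact: measurable_preimageT.
have mE : measurable E.
  have -> : E = \bigcap_(j in [set: 'I_m])
      (setT `&` [set t | A j t * Z t <= cst (c * x j) t]).
    apply/seteqP; split => [t Et j _|t Et j]; first by split; last exact: Et.
    by have [] := Et j I.
  apply: fin_bigcap_measurable => [|j _]; first exact: finite_finset.
  by apply: measurable_fun_le => //; exact: measurable_funM.
have mF : measurable F.
  by rewrite -[F]setTI; apply: measurable_fun_le => //; exact: measurable_funM.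
have EF t : 0 < Z t -> E t <-> F t.
  move=> Zt_gt0; have cZ_ge0 : 0 <= c / Z t by rewrite divr_ge0 ?ltW.
  rewrite /F /= mulrC -ler_pdivlMr// (M_le _ cZ_ge0).
  by split => le_c j; have := le_c j; rewrite mulrAC ler_pdivlMr.
have EN_FN : E `|` N = F `|` N.
  apply/seteqP; split => t; have [Zt_le0 _|Zt_gt0] := leP (Z t) 0;
    do ?[by right; rewrite /N /= in_itv /=];
    by case=> [/(EF t Zt_gt0)|]; [left|right].
have N0 := unit_frechet_le0 mZ frechetZ.
by rewrite -(measureU0 mE mN N0) EN_FN measureU0.
Qed.

Lemma cvg_n_one_sub_prob_event :
  (fun n : nat => n%:R * (1 - fine (P [set t | forall j,
     A j t * Z t <= n%:R * x j]))) @ \oo --> Rintegral P setT M.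
Proof.
apply: cvg_trans (cvg_n_one_sub_integral_expR mM M_ge0 intM).
apply: near_eq_cvg; near=> n.
have n_gt0 : (0 : R) < n%:R by rewrite ltr0n; near: n; exists 1%N.
by rewrite prob_event// indep_rv_unit_frechet_mul_le.
Unshelve. all: by end_near.
Qed.

End frechet_scale_mixture.

Theorem mainTheorem1 (d : measure_display) (T : measurableType d)
  (R : realType) (P : probability T R) (m : nat)
  (Z : T -> R) (A : 'I_m -> T -> R)
  (mZ : measurable_fun setT Z) (mA : forall j, measurable_fun setT (A j))
  (hZ : unit_frechet P Z) (hind : indep_rv_vec P Z A)
  (hApos : forall j, (0 < \int[P]_t (Num.max (A j t) 0)%:E)%E)
  (hAfin : forall j, (\int[P]_t (Num.max (A j t) 0)%:E < +oo)%E)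
  (x : 'I_m -> R) (hx : forall j, 0 < x j) :
  (fun n : nat =>
     fine (P [set t | forall j, A j t * Z t <= n%:R * x j]) ^+ n)
    @ \oo -->
  expR (- fine (\int[P]_t (\big[Num.max/0]_(j < m) (A j t / x j))%:E)).
Proof.
apply: cvg_pow_n_one_sub.
exact: cvg_n_one_sub_prob_event mZ mA hZ hind hx hAfin.
Qed.
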